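(* Let $C_*>1$. There is a constant $C>0$ depending only on $C_*$ such that the following holds. Let $\mathscr{T}$ be a $C_*$-regular triangular complex in $\mathbb{R}^3$ with chosen triangle unit normals $\bar n(\kappa)$, and let $n$ be a unit edge director on $\mathscr{T}$. Then for every edge $e=\kappa\cap\kappa'\in\mathscr{E}(\mathscr{T})$, \[ |n(e)-\bar n(\kappa)|\le C\,(\mathrm{diam}\,\kappa)\,|Dn_\kappa|. \]
   Context: A triangle is $\kappa=\mathrm{conv}(x,y,z)\subset\mathbb{R}^3$ with $x,y,z$ not collinear; its edges are $[x,y],[y,z],[x,z]$; its unit normal $\bar n(\kappa)$ is one of the two vectors $\pm\frac{(y-x)\times(z-x)}{|(y-x)\times(z-x)|}$ (fixed by a choice). A triangular complex is a finite family of triangles, any two distinct of which intersect in the empty set, a common vertex, or a whole common edge; $\mathscr{E}(\mathscr{T})$ is its set of edges. It is $C_*$-regular if $\mathcal{H}^2(\kappa)\ge C_*^{-1}(\mathrm{diam}\,\kappa)^2$ for all $\kappa$. A unit edge director is a map $n:\mathscr{E}(\mathscr{T})\to S^2$ with $n(e)\cdot\tau(e)=0$ (where $\tau(e)$ is a unit vector along $e$) and $n(e)\cdot\bar n(\kappa)\ge0$ for every triangle $\kappa$ containing $e$. On each $\kappa$, $n$ is extended to the unique affine map $\kappa\to\mathbb{R}^3$ taking the value $n(e)$ at the midpoint of each edge $e$ of $\kappa$; $Dn_\kappa\in\mathbb{R}^{3\times3}$ is its (constant) gradient, viewed as a linear map on the plane of $\kappa$ precomposed with the orthogonal projection onto that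 plane; $|\cdot|$ is a matrix norm. *)

From mathcomp Require Import all_boot all_order all_algebra.
From mathcomp Require Import boolp classical_sets reals.
Set Implicit Arguments. Unset Strict Implicit. Unset Printing Implicit Defensive.
Import Order.TTheory GRing.Theory Num.Theory.
Local Open Scope ring_scope.
Local Open Scope classical_set_scope.

Section Geometry.
Variable R : realType.

Definition vec := 'rV[R]_3.

Definition dot (u v : vec) : R := \sum_(i < 3) u 0 i * v 0 i.
Definition enorm (u : vec) : R := Num.sqrt (dot u u).
Definition frob (A : 'M[R]_3) : R := Num.sqrt (\sum_(i < 3) \sum_(j < 3) A i j ^+ 2).

Definition cross (u v : vec) : vec :=
  \row_(i < 3) (if i == 0%N :> nat then u 0 1 * v 0 2 - u 0 2 * v 0 1
                else if i == 1%N :> nat then u 0 2 * v 0 0 - u 0 0 * v 0 2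
                else u 0 0 * v 0 1 - u 0 1 * v 0 0).

Definition triple := (vec * vec * vec)%type.
Definition tx (t : triple) : vec := t.1.1.
Definition ty (t : triple) : vec := t.1.2.
Definition tz (t : triple) : vec := t.2.

Definition seg (a b : vec) : set vec :=
  [set p | exists l : R, 0 <= l /\ l <= 1 /\ p = (1 - l) *: a + l *: b].

Definition tri (t : triple) : set vec :=
  [set p | exists a b c : R, [/\ 0 <= a, 0 <= b, 0 <= c, a + b + c = 1 &
      p = a *: tx t + b *: ty t + c *: tz t]].

Definition tcross (t : triple) : vec := cross (ty t - tx t) (tz t - tx t).

Definition noncollinear (t : triple) : Prop := tcross t != 0.

Definition is_vertex_of (t : triple) (v : vec) : Prop :=
  v = tx t \/ v = ty t \/ v = tz t.

Definition is_edge_of (t : triple) (e : set vec) : Prop :=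
  e = seg (tx t) (ty t) \/ e = seg (ty t) (tz t) \/ e = seg (tx t) (tz t).

Definition edge_endpoints (t : triple) (a b : vec) : Prop :=
  (a = tx t /\ b = ty t) \/ (a = ty t /\ b = tz t) \/ (a = tx t /\ b = tz t).

Definition diam (S : set vec) : R :=
  sup [set r | exists p q, [/\ S p, S q & r = enorm (p - q)]].

Definition area (t : triple) : R := enorm (tcross t) / 2.

Definition triangular_complex (T : seq triple) : Prop :=
  (forall t, t \in T -> noncollinear t) /\
  (forall t t', t \in T -> t' \in T -> tri t <> tri t' ->
     tri t `&` tri t' = set0 \/
     (exists v, [/\ is_vertex_of t v, is_vertex_of t' v & tri t `&` tri t' = [set v]]) \/
     (exists e, [/\ is_edge_of t e, is_edge_of t' e & tri t `&` tri t' = e])).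

Definition edges (T : seq triple) : set (set vec) :=
  [set e | exists2 t, t \in T & is_edge_of t e].

Definition regular (Cs : R) (T : seq triple) : Prop :=
  forall t, t \in T -> area t >= Cs^-1 * diam (tri t) ^+ 2.

Definition normal_choice (T : seq triple) (nbar : set vec -> vec) : Prop :=
  forall t, t \in T ->
    nbar (tri t) = (enorm (tcross t))^-1 *: tcross t \/
    nbar (tri t) = - ((enorm (tcross t))^-1 *: tcross t).

Definition unit_edge_director (T : seq triple) (nbar : set vec -> vec)
    (n : set vec -> vec) : Prop :=
  forall t a b, t \in T -> edge_endpoints t a b ->
    [/\ enorm (n (seg a b)) = 1,
        dot (n (seg a b)) ((enorm (b - a))^-1 *: (b - a)) = 0 &
        forall t', t' \in T -> is_edge_of t' (seg a b) ->
          0 <= dot (n (seg a b)) (nbar (tri t'))].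

Definition midpoint (a b : vec) : vec := 2^-1 *: (a + b).

Definition plane_proj (t : triple) : 'M[R]_3 :=
  let nu := (enorm (tcross t))^-1 *: tcross t in 1%:M - nu^T *m nu.

(* A (acting on row vectors u |-> u *m A) is Dn_kappa: the gradient of the
   affine map on kappa taking value n(e) at the midpoint of each edge e,
   viewed as a linear map on the plane precomposed with the projection *)
Definition is_Dn (n : set vec -> vec) (t : triple) (A : 'M[R]_3) : Prop :=
  (exists c : vec,
     [/\ c + midpoint (tx t) (ty t) *m A = n (seg (tx t) (ty t)),
         c + midpoint (ty t) (tz t) *m A = n (seg (ty t) (tz t)) &
         c + midpoint (tx t) (tz t) *m A = n (seg (tx t) (tz t))]) /\
  A = plane_proj t *m A.

End Geometry.

(* Along a triangle the edge values of n differ by at most diam(kappa) |Dn|,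
   and each n(e') is orthogonal to its own edge; so every n(e) has components
   of size at most diam(kappa) |Dn| |u|, resp. |v|, along the sides
   u = y - x and v = z - x.  Since n(e) x (u x v) = (n(e).v) u - (n(e).u) v,
   this bounds |n(e) x N|, N = u x v, by 2 diam(kappa) |Dn| |u| |v|, and
   regularity gives 2 |u| |v| <= 2 diam(kappa)^2 <= C_* |N|.  Hence the sine
   of the angle between n(e) and nbar(kappa) = +-N/|N| is at most
   C_* diam(kappa) |Dn|; as that angle is at most pi/2,
   |n(e) - nbar(kappa)| <= 2 |n(e) x nbar(kappa)|, and C = 2 C_* works. *)

From mathcomp Require Import all_boot all_order all_algebra.
From mathcomp Require Import boolp classical_sets reals.
From mathcomp Require Import ring lra.
Import Order.TTheory GRing.Theory Num.Theory.
Local Open Scope ring_scope.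
Local Open Scope classical_set_scope.

Section EdgeNormal.
Set Implicit Arguments.
Unset Strict Implicit.
Variable R : realType.
Implicit Types (u v w m : vec R) (a : R).

Lemma dotE u v : dot u v = u 0 0 * v 0 0 + u 0 1 * v 0 1 + u 0 2 * v 0 2.
Proof.
rewrite /dot !big_ord_recr big_ord0 /= add0r.
by congr (u 0 _ * v 0 _ + u 0 _ * v 0 _ + u 0 _ * v 0 _); apply: val_inj.
Qed.

Lemma row3P u w : u 0 0 = w 0 0 -> u 0 1 = w 0 1 -> u 0 2 = w 0 2 -> u = w.
Proof.
move=> h0 h1 h2; apply/rowP => -[[|[|[|//]]] i3].
- by rewrite (_ : Ordinal i3 = 0) //; apply: val_inj.
- by rewrite (_ : Ordinal i3 = 1) //; apply: val_inj.
- by rewrite (_ : Ordinal i3 = 2) //; apply: val_inj.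
Qed.

Lemma dot_ge0 u : 0 <= dot u u.
Proof. by rewrite dotE -!expr2 !addr_ge0 ?sqr_ge0. Qed.

Lemma dotDD u v : dot (u + v) (u + v) = dot u u + 2 * dot u v + dot v v.
Proof. by rewrite !dotE !mxE; ring. Qed.

Lemma dotBl u v w : dot (u - v) w = dot u w - dot v w.
Proof. by rewrite !dotE !mxE; ring. Qed.

Lemma dotZr u a v : dot u (a *: v) = a * dot u v.
Proof. by rewrite !dotE !mxE; ring. Qed.

Lemma dotZZ a u : dot (a *: u) (a *: u) = a ^+ 2 * dot u u.
Proof. by rewrite !dotE !mxE; ring. Qed.

Lemma dot_cross u v : dot (cross u v) (cross u v) = dot u u * dot v v - dot u v ^+ 2.
Proof. by rewrite !dotE !mxE /=; ring. Qed.

Lemma cross_crossE m u v : cross m (cross u v) = dot m v *: u - dot m u *: v.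
Proof. by apply: row3P; rewrite !mxE !dotE /=; ring. Qed.

Lemma crossZr m a w : cross m (a *: w) = a *: cross m w.
Proof. by apply: row3P; rewrite !mxE /=; ring. Qed.

Lemma dot_gt0 u : u != 0 -> 0 < dot u u.
Proof.
move=> u0; rewrite lt_def dot_ge0 andbT; apply: contra u0 => /eqP uu0.
by rewrite dotE in uu0; apply/eqP/row3P; rewrite !mxE; nra.
Qed.

Lemma dot_sqr_le u v : dot u v ^+ 2 <= dot u u * dot v v.
Proof. by rewrite -subr_ge0 -dot_cross dot_ge0. Qed.

Lemma enorm_ge0 u : 0 <= enorm u.
Proof. exact: sqrtr_ge0. Qed.

Lemma enorm_gt0 u : u != 0 -> 0 < enorm u.
Proof. by move=> u0; rewrite sqrtr_gt0 dot_gt0. Qed.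

Lemma sqr_enorm u : enorm u ^+ 2 = dot u u.
Proof. by rewrite sqr_sqrtr ?dot_ge0. Qed.

Lemma enorm_le a u : 0 <= a -> dot u u <= a ^+ 2 -> enorm u <= a.
Proof. by move=> a0 ua; rewrite -(ger0_norm a0) -sqrtr_sqr ler_wsqrtr. Qed.

Lemma dot_le_enorm u v : `|dot u v| <= enorm u * enorm v.
Proof. by rewrite -sqrtr_sqr -sqrtrM ?dot_ge0 // ler_wsqrtr // dot_sqr_le. Qed.

Lemma enormZ a u : enorm (a *: u) = `|a| * enorm u.
Proof. by rewrite /enorm dotZZ sqrtrM ?sqr_ge0 // sqrtr_sqr. Qed.

Lemma enormN u : enorm (- u) = enorm u.
Proof. by rewrite -scaleN1r enormZ normrN1 mul1r. Qed.

Lemma enormD u v : enorm (u + v) <= enorm u + enorm v.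
Proof.
apply: enorm_le; first by rewrite addr_ge0 ?enorm_ge0.
have := ler_norm (dot u v); have := dot_le_enorm u v.
by rewrite dotDD sqrrD !sqr_enorm; lra.
Qed.

Lemma enormB u v : enorm (u - v) <= enorm u + enorm v.
Proof. by rewrite -(enormN v) enormD. Qed.

Lemma frob_ge0 (A : 'M[R]_3) : 0 <= frob A.
Proof. exact: sqrtr_ge0. Qed.

Lemma enorm_mulmx u (A : 'M[R]_3) : enorm (u *m A) <= enorm u * frob A.
Proof.
apply: enorm_le; first by rewrite mulr_ge0 ?enorm_ge0 ?frob_ge0.
rewrite exprMn sqr_enorm sqr_sqrtr; last first.
  by apply/sumr_ge0 => i _; apply/sumr_ge0 => j _; apply: sqr_ge0.
rewrite exchange_big mulr_sumr; apply: ler_sum => j _.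
have -> : (u *m A) 0 j = dot u (col j A)^T.
  by rewrite !mxE; apply: eq_bigr => i _; rewrite !mxE.
have -> : \sum_(i < 3) A i j ^+ 2 = dot (col j A)^T (col j A)^T.
  by apply: eq_bigr => i _; rewrite !mxE expr2.
exact: dot_sqr_le.
Qed.

Implicit Types (t : triple R) (p q : vec R).

Lemma tri_tx t : tri t (tx t).
Proof. by exists 1, 0, 0; split; rewrite ?scale0r ?scale1r ?addr0. Qed.

Lemma tri_ty t : tri t (ty t).
Proof. by exists 0, 1, 0; split; rewrite ?scale0r ?scale1r ?addr0 ?add0r. Qed.

Lemma tri_tz t : tri t (tz t).
Proof. by exists 0, 0, 1; split; rewrite ?scale0r ?scale1r ?add0r. Qed.

Lemma tri_midpoint t p q : tri t p -> tri t q -> tri t (midpoint p q).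
Proof.
move=> [a [b [c [a0 b0 c0 abc ->]]]] [a' [b' [c' [a0' b0' c0' abc' ->]]]].
exists (2^-1 * (a + a')), (2^-1 * (b + b')), (2^-1 * (c + c')).
by split; [lra | lra | lra | lra | apply/rowP => i; rewrite !mxE; ring].
Qed.

Lemma tri_enorm_le t p : tri t p -> enorm p <= enorm (tx t) + enorm (ty t) + enorm (tz t).
Proof.
move=> [a [b [c [a0 b0 c0 abc ->]]]].
have scale_le k q : 0 <= k -> k <= 1 -> enorm (k *: q) <= enorm q.
  by move=> k0 k1; rewrite enormZ ger0_norm // ler_piMl ?enorm_ge0.
apply: le_trans (enormD _ _) _; apply: lerD; last by apply: scale_le => //; lra.
by apply: le_trans (enormD _ _) _; apply: lerD; apply: scale_le => //; lra.
Qed.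

Lemma tri_dist_le_diam t p q : tri t p -> tri t q -> enorm (p - q) <= diam (tri t).
Proof.
move=> tp tq; apply: sup_upper_bound; last by exists p, q.
split; first by exists (enorm (p - q)), p, q.
exists (2 * (enorm (tx t) + enorm (ty t) + enorm (tz t))) => _ [p' [q' [tp' tq' ->]]].
have := tri_enorm_le tp'; have := tri_enorm_le tq'; have := enormB p' q'; lra.
Qed.

Lemma diam_tri_ge0 t : 0 <= diam (tri t).
Proof. exact: le_trans (enorm_ge0 _) (tri_dist_le_diam (tri_tx t) (tri_tx t)). Qed.

Lemma is_Dn_edge (n : set (vec R) -> vec R) t (A : 'M[R]_3) : is_Dn n t A ->
  exists c, forall e, is_edge_of t e -> exists2 p, tri t p & n e = c + p *m A.
Proof.
move=> [[c [nxy nyz nxz]] _]; exists c => e [|[|]] ->.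
- by exists (midpoint (tx t) (ty t)); rewrite ?nxy //; apply: tri_midpoint (tri_tx t) (tri_ty t).
- by exists (midpoint (ty t) (tz t)); rewrite ?nyz //; apply: tri_midpoint (tri_ty t) (tri_tz t).
- by exists (midpoint (tx t) (tz t)); rewrite ?nxz //; apply: tri_midpoint (tri_tx t) (tri_tz t).
Qed.

Lemma is_Dn_edge_dist (n : set (vec R) -> vec R) t (A : 'M[R]_3) e e' :
  is_Dn n t A -> is_edge_of t e -> is_edge_of t e' ->
  enorm (n e - n e') <= diam (tri t) * frob A.
Proof.
move=> /is_Dn_edge[c nE] /nE[p tp ->] /nE[p' tp' ->].
rewrite opprD addrACA subrr add0r -mulmxBl.
apply: le_trans (enorm_mulmx _ _) _.
by rewrite ler_wpM2r ?frob_ge0 ?tri_dist_le_diam.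
Qed.

Lemma dot_normalize_eq0 m u : dot m ((enorm u)^-1 *: u) = 0 -> dot m u = 0.
Proof.
rewrite dotZr => /eqP; rewrite mulf_eq0 invr_eq0 => /orP[/eqP u0|/eqP //].
have := dot_sqr_le m u; rewrite -(sqr_enorm u) u0 expr0n mulr0 => mu_le0.
by apply/eqP; rewrite -sqrf_eq0 eq_le mu_le0 sqr_ge0.
Qed.

Lemma dot_orth_le m n1 u : dot n1 u = 0 -> `|dot m u| <= enorm (m - n1) * enorm u.
Proof. by move=> n1u; rewrite -[dot m u]subr0 -n1u -dotBl dot_le_enorm. Qed.

Lemma edge_director_unit T nbar n t e : unit_edge_director T nbar n -> t \in T ->
  is_edge_of t e -> enorm (n e) = 1 /\ 0 <= dot (n e) (nbar (tri t)).
Proof.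
move=> dir tT te; have [p [q [pq ->]]] : exists p q, edge_endpoints t p q /\ e = seg p q.
  case: te => [|[|]] ->; [exists (tx t), (ty t) | exists (ty t), (tz t) | exists (tx t), (tz t)].
  - by split=> //; left.
  - by split=> //; right; left.
  - by split=> //; right; right.
have [n1 _ pos] := dir t p q tT pq; split=> //; apply: pos tT _.
by case: pq => [[-> ->]|[[-> ->]|[-> ->]]]; [left | right; left | right; right].
Qed.

Lemma edge_director_orth T nbar n t : unit_edge_director T nbar n -> t \in T ->
  dot (n (seg (tx t) (ty t))) (ty t - tx t) = 0 /\
  dot (n (seg (tx t) (tz t))) (tz t - tx t) = 0.
Proof.
move=> dir tT; split; apply: dot_normalize_eq0.
- by have [_ -> _] := dir t (tx t) (ty t) tT (or_introl (conj erefl erefl)).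
- by have [_ -> _] := dir t (tx t) (tz t) tT (or_intror (or_intror (conj erefl erefl))).
Qed.

Lemma edge_director_dot_le T nbar n t (A : 'M[R]_3) e :
  unit_edge_director T nbar n -> t \in T -> is_Dn n t A -> is_edge_of t e ->
  `|dot (n e) (ty t - tx t)| <= diam (tri t) * frob A * enorm (ty t - tx t) /\
  `|dot (n e) (tz t - tx t)| <= diam (tri t) * frob A * enorm (tz t - tx t).
Proof.
move=> dir tT nA te; have [oxy oxz] := edge_director_orth dir tT.
split; [apply: le_trans (dot_orth_le _ oxy) _ | apply: le_trans (dot_orth_le _ oxz) _].
- by rewrite ler_wpM2r ?enorm_ge0 //; apply: is_Dn_edge_dist nA te _; left.
- by rewrite ler_wpM2r ?enorm_ge0 //; apply: is_Dn_edge_dist nA te _; right; right.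
Qed.

Lemma normal_choice_scale T nbar t : normal_choice T nbar -> t \in T ->
  exists2 s : R, nbar (tri t) = s *: tcross t & `|s| = (enorm (tcross t))^-1.
Proof.
move=> nb tT; have k0 : 0 <= (enorm (tcross t))^-1 by rewrite invr_ge0 enorm_ge0.
case: (nb t tT) => ->; first by exists (enorm (tcross t))^-1; rewrite ?ger0_norm.
by exists (- (enorm (tcross t))^-1); rewrite ?scaleNr // normrN ger0_norm.
Qed.

Lemma unit_dist_le_cross m nu : enorm m = 1 -> enorm nu = 1 -> 0 <= dot m nu ->
  enorm (m - nu) <= 2 * enorm (cross m nu).
Proof.
move=> m1 nu1 mnu0.
have mm : dot m m = 1 by rewrite -sqr_enorm m1 expr1n.
have nn : dot nu nu = 1 by rewrite -sqr_enorm nu1 expr1n.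
apply: enorm_le; first by rewrite mulr_ge0 ?enorm_ge0.
have -> : dot (m - nu) (m - nu) = dot m m - 2 * dot m nu + dot nu nu.
  by rewrite !dotE !mxE; ring.
have := dot_sqr_le m nu; rewrite exprMn sqr_enorm dot_cross mm nn; nra.
Qed.

Lemma enorm_cross_cross_le m u v :
  enorm (cross m (cross u v)) <= `|dot m v| * enorm u + `|dot m u| * enorm v.
Proof. by rewrite cross_crossE; apply: le_trans (enormB _ _) _; rewrite !enormZ. Qed.

Lemma normal_deviation_le (Cs d s : R) m u v :
  cross u v != 0 -> 0 <= d -> `|s| = (enorm (cross u v))^-1 ->
  enorm m = 1 -> 0 <= dot m (s *: cross u v) ->
  `|dot m u| <= d * enorm u -> `|dot m v| <= d * enorm v ->
  2 * (enorm u * enorm v) <= Cs * enorm (cross u v) ->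
  enorm (m - s *: cross u v) <= 2 * Cs * d.
Proof.
move=> N0 d0 s_inv m1 mnu mu mv uvN; have N_gt0 := enorm_gt0 N0.
have nu1 : enorm (s *: cross u v) = 1 by rewrite enormZ s_inv mulVf ?gt_eqF.
apply: le_trans (unit_dist_le_cross m1 nu1 mnu) _.
rewrite -mulrA ler_pM2l // crossZr enormZ s_inv ler_pdivrMl //.
apply: le_trans (enorm_cross_cross_le m u v) _.
have := ler_wpM2r (enorm_ge0 u) mv; have := ler_wpM2r (enorm_ge0 v) mu.
have := ler_wpM2l d0 uvN; lra.
Qed.

Lemma regular_sides_le (Cs : R) t : 0 < Cs -> Cs^-1 * diam (tri t) ^+ 2 <= area t ->
  2 * (enorm (ty t - tx t) * enorm (tz t - tx t)) <= Cs * enorm (tcross t).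
Proof.
move=> Cs0; rewrite /area ler_pdivrMl // => reg.
have := ler_pM (enorm_ge0 _) (enorm_ge0 _)
  (tri_dist_le_diam (tri_ty t) (tri_tx t)) (tri_dist_le_diam (tri_tz t) (tri_tx t)).
rewrite -expr2; lra.
Qed.

End EdgeNormal.

Theorem lemma3p1 (R : realType) (Cs : R) (hCs : 1 < Cs) :
  exists C : R, 0 < C /\
  forall (T : seq (triple R)) (nbar n : set (vec R) -> vec R),
    triangular_complex T -> regular Cs T ->
    normal_choice T nbar -> unit_edge_director T nbar n ->
    forall t t' (e : set (vec R)), t \in T -> t' \in T -> tri t <> tri t' ->
      is_edge_of t e -> tri t `&` tri t' = e ->
      forall A : 'M[R]_3, is_Dn n t A ->
        enorm (n e - nbar (tri t)) <= C * diam (tri t) * frob A.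
Proof.
have Cs0 : 0 < Cs := lt_trans ltr01 hCs.
exists (2 * Cs); split; first by rewrite mulr_gt0.
move=> T nbar n [noncol _] reg nb dir t t' e tT _ _ te _ A nA.
have [ne1 ne_pos] := edge_director_unit dir tT te.
have [s nbarE s_inv] := normal_choice_scale nb tT.
have [neu nev] := edge_director_dot_le dir tT nA te.
rewrite nbarE in ne_pos *; rewrite -mulrA.
apply: normal_deviation_le s_inv ne1 ne_pos neu nev _.
- exact: noncol.
- by rewrite mulr_ge0 ?diam_tri_ge0 ?frob_ge0.
- exact: regular_sides_le Cs0 (reg t tT).
Qed.
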